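(* Let $G$ be a connected $4$-regular graph and let $H$ be a proper subgraph of $G$ whose number of vertices is not divisible by $3$. Then $H$ contains a vertex of degree at most $3$ in $H$ which does not lie in a connected component of $H$ consisting of a single triangle. *)

From mathcomp Require Import all_boot.
Set Implicit Arguments. Unset Strict Implicit. Unset Printing Implicit Defensive.

Section Graphs.
Variable T : finType.

Definition simple_graph (e : rel T) : Prop := symmetric e /\ irreflexive e.

Definition deg (e : rel T) (x : T) : nat := #|[set y | e x y]|.

Definition regular (e : rel T) (k : nat) : Prop := forall x, deg e x = k.

Definition connected_graph (e : rel T) : Prop := forall x y, connect e x y.

Definition subgraph (e : rel T) (V : {set T}) (F : rel T) : Prop :=
  symmetric F /\ forall x y, F x y -> [&& e x y, x \in V & y \in V].

Definition proper_subgraph (e : rel T) (V : {set T}) (F : rel T) : Prop :=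
  subgraph e V F /\ (V != [set: T] \/ exists x y, e x y && ~~ F x y).

Definition hdeg (V : {set T}) (F : rel T) (x : T) : nat := #|[set y in V | F x y]|.

Definition hcomp (F : rel T) (x : T) : {set T} := [set y | connect F x y].

Definition triangle_component (F : rel T) (x : T) : Prop :=
  #|hcomp F x| = 3 /\
  forall a b, a \in hcomp F x -> b \in hcomp F x -> a != b -> F a b.

End Graphs.

From mathcomp Require Import all_boot.
From Stdlib Require Import Classical.
Set Implicit Arguments. Unset Strict Implicit. Unset Printing Implicit Defensive.

(* Suppose every vertex of H of degree at most 3 lies in a triangle component.
   A vertex of H-degree 4 has all its G-edges in H, and none of its neighbours
   can have degree at most 3 (it would then share a triangle component, of
   degree 2). So the vertices of H-degree 4 form a union of components of the
   connected graph G: either none of them, or all of G, which would make H = G.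
   Hence H is a disjoint union of triangles and 3 divides its order. *)

Section Components.
Variables (T : finType) (F : rel T).
Hypothesis sym_F : symmetric F.

Lemma hcomp_connect x y : connect F x y -> hcomp F x = hcomp F y.
Proof.
move=> cxy; apply/setP=> z; rewrite !inE; apply/idP/idP => [cyz|].
- by apply: connect_trans cyz; rewrite sym_connect_sym.
- exact: connect_trans.
Qed.

Lemma triangle_component_connect x y :
  connect F x y -> triangle_component F x -> triangle_component F y.
Proof. by rewrite /triangle_component => /hcomp_connect ->. Qed.

Lemma hdeg_triangle_component (V : {set T}) x :
  irreflexive F -> triangle_component F x -> hdeg V F x <= 2.
Proof.
move=> irr_F [card_comp _].
have nbr_sub : [set y in V | F x y] \subset hcomp F x :\ x.
  apply/subsetP=> y; rewrite !inE => /andP[_ Fxy].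
  rewrite connect1 // andbT; apply: contraTneq Fxy => ->.
  by rewrite irr_F.
apply: leq_trans (subset_leq_card nbr_sub) _.
have x_comp : x \in hcomp F x by rewrite inE connect0.
by move: card_comp; rewrite (cardsD1 x) x_comp add1n => -[->].
Qed.

Lemma dvdn_card_closed (V : {set T}) k :
  closed F V -> {in V, forall x, k %| #|hcomp F x|} -> k %| #|V|.
Proof.
move=> clV dvd_comp.
have eqF : {in V & &, equivalence_rel (connect F)}.
  move=> x y z _ _ _; split=> [|cxy]; first exact: connect0.
  by apply/idP/idP; apply: connect_trans; rewrite // sym_connect_sym.
rewrite (card_partition (equivalence_partitionP eqF)).
apply: dvdn_sum => _ /imsetP[x xV ->].
have -> : [set y in V | connect F x y] = hcomp F x.
  by apply/setP=> y; rewrite !inE andb_idl // => /(closed_connect clV) <-.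
exact: dvd_comp.
Qed.

End Components.

Lemma connected_closed_setT (T : finType) (e : rel T) (A : {set T}) :
  connected_graph e -> closed e A -> A != set0 -> A = [set: T].
Proof.
move=> conn clA /set0Pn[a aA]; apply/setP=> x.
by rewrite inE -(closed_connect clA (conn a x)).
Qed.

Lemma subgraph_full_hdeg_edge (T : finType) (e : rel T) V F v y :
  subgraph e V F -> deg e v <= hdeg V F v -> e v y -> F v y.
Proof.
move=> [_ subF] full evy.
have nbr_sub : [set y in V | F v y] \subset [set y | e v y].
  by apply/subsetP=> z; rewrite !inE => /andP[_ /subF/andP[->]].
have /eqP/setP/(_ y) : [set y in V | F v y] == [set y | e v y].
  by rewrite eqEcard nbr_sub.
by rewrite !inE evy => /andP[].
Qed.

Section AllLowDegreeInTriangles.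
Variables (T : finType) (e : rel T) (V : {set T}) (F : rel T).
Hypotheses (simple_e : simple_graph e) (conn_e : connected_graph e)
  (reg_e : regular e 4) (subVF : subgraph e V F).
Hypothesis low_hdeg_triangle :
  forall v, v \in V -> hdeg V F v <= 3 -> triangle_component F v.

Let sym_F : symmetric F := subVF.1.

Let irr_F : irreflexive F.
Proof. by move=> x; apply/negP => /subVF.2/andP[]; rewrite simple_e.2. Qed.

Let closed_V : closed F V.
Proof. by move=> x y /subVF.2/and3P[_ -> ->]. Qed.

Let full := [set v in V | 3 < hdeg V F v].

Let full_edge v y : v \in full -> e v y -> F v y.
Proof.
rewrite inE => /andP[_ hv]; apply: subgraph_full_hdeg_edge subVF _.
by rewrite reg_e.
Qed.

Let full_neighbour v y : v \in full -> F v y -> y \in full.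
Proof.
move=> v_full Fvy; have /and3P[_ _ yV] := subVF.2 _ _ Fvy.
rewrite inE yV ltnNge; apply/negP => /(low_hdeg_triangle yV) tri_y.
have tri_v : triangle_component F v.
  apply: (triangle_component_connect sym_F) tri_y.
  by rewrite (sym_connect_sym sym_F) connect1.
move: v_full; rewrite inE => /andP[_]; apply/negP; rewrite -leqNgt.
exact: leq_trans (hdeg_triangle_component V irr_F tri_v) _.
Qed.

Let closed_full : closed e full.
Proof.
apply: intro_closed; first exact: sym_connect_sym simple_e.1.
by move=> x y exy x_full; apply: full_neighbour x_full (full_edge x_full exy).
Qed.

Lemma proper_subgraph_triangle_components :
  proper_subgraph e V F -> {in V, forall v, triangle_component F v}.
Proof.
case=> _ proper.
have full0 : full = set0.
  apply: contraTeq isT => /(connected_closed_setT conn_e closed_full) fullT.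
  have all_full x : x \in full by rewrite fullT inE.
  case: proper => [/negP[] | [x [y /andP[exy /negP[]]]]]; last exact: full_edge.
  by apply/eqP/setP=> z; have := all_full z; rewrite !inE => /andP[->].
move=> v vV; have /negbT : v \in full = false by rewrite full0 inE.
by rewrite inE vV /= -leqNgt => /(low_hdeg_triangle vV).
Qed.

Lemma proper_subgraph_dvdn3 : proper_subgraph e V F -> 3 %| #|V|.
Proof.
move/proper_subgraph_triangle_components => tri.
apply: dvdn_card_closed closed_V _ => // v /tri[-> _].
exact: dvdnn.
Qed.

End AllLowDegreeInTriangles.

Theorem lemmaA16 (T : finType) (e : rel T) (V : {set T}) (F : rel T) :
  simple_graph e -> connected_graph e -> regular e 4 ->
  proper_subgraph e V F -> ~~ (3 %| #|V|) ->
  exists2 v, v \in V & hdeg V F v <= 3 /\ ~ triangle_component F v.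
Proof.
move=> simple_e conn_e reg_e properVF ndvd; apply: NNPP => no_witness.
have low_hdeg_triangle v : v \in V -> hdeg V F v <= 3 -> triangle_component F v.
  by move=> vV hv; apply: NNPP => ntri; apply: no_witness; exists v.
move/negP: ndvd; apply.
exact: proper_subgraph_dvdn3 simple_e conn_e reg_e properVF.1 low_hdeg_triangle properVF.
Qed.
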